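(* Consider the $T$-round online first-price auction problem and the AR-Prod policy described in the context, and assume $V_T=o(T)$. (i) If $V_T$ is known, restarting the Prod forecaster with translation $\mu_t=\max\{v_t-m_t,0\}$ every $\Delta_T$ rounds, with constant batch size $\Delta_T$ of order $\sqrt{T/V_T}$, achieves expected dynamic regret $\tilde{O}(\sqrt{TV_T})$ over all sequences in $\mathcal{V}$. (ii) If $V_T$ is unknown, the AR-Prod policy satisfies \[ \sup_{(v_t,m_t)_{t=1}^T\in\mathcal{V}}\mathbb{E}[\mathrm{DR}_T(\pi)]=\tilde{O}\left(\max\left\{\sqrt{TV_T},1\right\}\right). \]
   Context: Online first-price auction over $T$ rounds: at each round $t$ the learner observes a private value $v_t\in[0,1]$, submits a bid $b_t\in[0,1]$ (possibly randomized, depending only on past $(v_s,m_s)_{s<t}$ and $v_t$), then observes $m_t\in[0,1]$, the highest bid of the other bidders, and receives reward $r(b_t;v_t,m_t)$ with $r(b;v,m)\coloneqq(v-b)\mathbbm{1}(b\ge m)$. The expected dynamic regret is $\mathbb{E}[\mathrm{DR}_T(\pi)]\coloneqq\sum_{t=1}^T\max\{v_t-m_t,0\}-\sum_{t=1}^T\mathbb{E}[r(b_t;v_t,m_t)]$. For $V_T\ge0$, $\mathcal{V}\coloneqq\{(v_t,m_t)_{t=1}^T\in[0,1]^{2T}:\sum_{t=2}^T|m_t-m_{t-1}|\le V_T\}$. $\tilde{O}(\cdot)$ hides polylogarithmic factors in $T$. Prod forecaster: fix a precision $\epsilon$ and $N=1/\epsilon$ experts; expert $i\in\{1,\dots,N\}$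 bids $\min\{v_t,i\epsilon\}$ and has reward $r_{t,i}\coloneqq r(\min\{v_t,i\epsilon\};v_t,m_t)$. Starting from $p=(1/N,\dots,1/N)$, at round $t$ the bid $\min\{v_t,i\epsilon\}$ is chosen with probability $p_{t,i}$, and after observing $m_t$ the weights are updated as $p_{t+1,i}=\frac{(1+\eta(r_{t,i}-\mu_t))p_{t,i}}{\sum_{k=1}^N(1+\eta(r_{t,k}-\mu_t))p_{t,k}}$ with $\mu_t=\max\{v_t-m_t,0\}$. AR-Prod policy: set $\eta=\frac12$, $\epsilon=\frac1T$, $c=\frac1T$. Time is split into consecutive batches $\mathcal{T}_1,\mathcal{T}_2,\dots$; at the first round of each batch the Prod forecaster is restarted (weights reset to uniform). For the current batch $j$, let $\Delta_{T,j}$ be its current length and $V_{T,j}$ the temporal variation $\sum|m_t-m_{t-1}|$ of the opponents' highest bids over consecutive rounds within batch $j$ observed so far, with $V_{T,i}$ for $i<j$ the variations of completed batches. After each round of batch $j$ the quantities are updated, and batch $j$ continues as long as $\Delta_{T,j}<\sqrt{T/(\sum_{i=1}^jV_{T,i}+c)}$; otherwise a new batch begins at the next round. *)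

From HB Require Import structures.
From mathcomp Require Import all_boot all_order all_algebra.
From mathcomp Require Import reals exp.
Set Implicit Arguments. Unset Strict Implicit. Unset Printing Implicit Defensive.
Import Order.TTheory GRing.Theory Num.Theory.
Local Open Scope ring_scope.

(* Rounds are indexed t = 0, ..., T-1 (round t here is round t+1 of the paper).
   Experts are indexed i = 1, ..., N, with precision eps = 1/N. *)

Definition reward {R : realType} (b v m : R) : R := if m <= b then v - b else 0.

Definition opt_reward {R : realType} (v m : R) : R := Num.max (v - m) 0.

Definition expert_bid {R : realType} (N i : nat) (v : R) : R :=
  Num.min v (i%:R / N%:R).

Definition expert_reward {R : realType} (N i : nat) (v m : R) : R :=
  reward (expert_bid N i v) v m.

Definition prod_update {R : realType} (N : nat) (eta : R) (p : nat -> R) (v m : R)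
  : nat -> R :=
  fun i =>
    let g j := 1 + eta * (expert_reward N j v m - opt_reward v m) in
    g i * p i / \sum_(1 <= k < N.+1) g k * p k.

Definition uniform {R : realType} (N : nat) : nat -> R := fun _ => N%:R^-1.

Fixpoint prod_weights {R : realType} (N : nat) (eta : R) (v m : nat -> R)
  (restart : nat -> bool) (t : nat) : nat -> R :=
  match t with
  | 0 => uniform N
  | t'.+1 => if restart t then uniform N
             else prod_update N eta (prod_weights N eta v m restart t') (v t') (m t')
  end.

(* Expected reward at round t: the bid min{v_t, i eps} is played with
   probability p_{t,i}; the weights are deterministic given the sequence. *)
Definition exp_reward_t {R : realType} (N : nat) (eta : R) (v m : nat -> R)
  (restart : nat -> bool) (t : nat) : R :=
  \sum_(1 <= i < N.+1) prod_weights N eta v m restart t i * expert_reward N i (v t) (m t).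

Definition exp_dyn_regret {R : realType} (T N : nat) (eta : R) (v m : nat -> R)
  (restart : nat -> bool) : R :=
  \sum_(t < T) opt_reward (v t) (m t) - \sum_(t < T) exp_reward_t N eta v m restart t.

Definition in_class {R : realType} (VT : R) (T : nat) (v m : nat -> R) : Prop :=
  (forall t, (t < T)%N -> (0 <= v t <= 1) /\ (0 <= m t <= 1)) /\
  \sum_(1 <= t < T) `|m t - m t.-1| <= VT.

Definition fixed_restart (Delta : nat) : nat -> bool := fun t => (t %% Delta == 0)%N.

(* AR-Prod batch state at the START of round t:
   (current batch length, variation within current batch, sum of variations
   of completed batches).  Current length 0 means round t starts a new batch. *)
Fixpoint ar_state {R : realType} (T : nat) (m : nat -> R) (t : nat) : nat * R * R :=
  match t with
  | 0 => (0%N, 0, 0)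
  | t'.+1 =>
      let: (L, Vc, Vp) := ar_state T m t' in
      let Vc' := if L == 0%N then Vc else Vc + `|m t' - m t'.-1| in
      if (L.+1)%:R < Num.sqrt (T%:R / (Vp + Vc' + T%:R^-1))
      then (L.+1, Vc', Vp)
      else (0%N, 0, Vp + Vc')
  end.

Definition ar_restart {R : realType} (T : nat) (m : nat -> R) : nat -> bool :=
  fun t => ((ar_state T m t).1.1 == 0)%N.

(* Expected dynamic regret of AR-Prod (eta = 1/2, eps = 1/T so N = T, c = 1/T) *)
Definition ar_prod_regret {R : realType} (T : nat) (v m : nat -> R) : R :=
  exp_dyn_regret T T (2^-1) v m (ar_restart T m).

(* Expected dynamic regret of Prod (eta = 1/2, eps = 1/T) restarted every Delta rounds *)
Definition restarted_prod_regret {R : realType} (T Delta : nat) (v m : nat -> R) : R :=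
  exp_dyn_regret T T (2^-1) v m (fixed_restart Delta).

From HB Require Import structures.
From mathcomp Require Import all_boot all_order all_algebra.
From mathcomp Require Import reals exp.
From mathcomp Require Import ring lra zify.
Set Implicit Arguments. Unset Strict Implicit. Unset Printing Implicit Defensive.
Import Order.TTheory GRing.Theory Num.Theory.
Local Open Scope ring_scope.

(* Translating the rewards by mu_t = max(v_t - m_t, 0) puts every expert's reward in
   [-1, 0]; one Prod step then gives
     eta (mu_t - E r_t) <= ln p_{t+1,c} - ln p_{t,c} - 2 eta (r_{t,c} - mu_t),
   so within a batch the regret of Prod is at most ln N / eta + 2 sum_t (mu_t - r_{t,c})
   for every expert c.  If the highest competing bid moves by W inside a batch, the
   expert bidding just above m_s + W wins every round and overbids by at most
   2 W + 1/N, so a batch of length L costs O(ln N + L W + L/N).  When every complete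
   batch has length at least lambda there are at most T/lambda + 1 batches, and the
   terms L W telescope against a potential: 4 D times the remaining variation for
   batches of constant length D ~ sqrt(T/V_T), and -8 sqrt T sqrt(S + 1/T) for AR-Prod,
   S being the variation accumulated so far, since its stopping rule
   L < sqrt(T / (S + W + 1/T)) gives L W <= 2 sqrt T (sqrt(S + W + 1/T) - sqrt(S + 1/T)).
   With lambda of order sqrt(T/V_T) both regrets are O(ln T max(sqrt(T V_T), 1)). *)

Lemma ln_le_subr1 {R : realType} (x : R) : 0 < x -> ln x <= x - 1.
Proof. by move=> x_gt0; have := @le_ln1Dx R (x - 1); rewrite (addrC 1) subrK; apply; lra. Qed.

Lemma double_le_ln1Dx {R : realType} (y : R) : - 2^-1 <= y <= 0 -> 2 * y <= ln (1 + y).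
Proof.
move=> /andP[y_ge y_le0]; have y1_gt0 : 0 < 1 + y by lra.
have := @ln_le_subr1 _ (1 + y)^-1; rewrite invr_gt0 lnV ?posrE // => /(_ y1_gt0).
suff : (1 + y)^-1 <= 1 - 2 * y by lra.
rewrite -[_^-1]mul1r ler_pdivrMr //; nra.
Qed.

Lemma ln_nat_ge_half {R : realType} (T : nat) : (2 <= T)%N -> 2^-1 <= ln (T%:R : R).
Proof.
move=> T_ge2; have T_ge2' : (2 : R) <= T%:R by rewrite (ler_nat R 2 T).
have T_gt0 : (0 : R) < T%:R by lra.
have := @ln_le_subr1 R T%:R^-1; rewrite invr_gt0 lnV ?posrE // => /(_ T_gt0).
have : T%:R^-1 <= 2^-1 :> R by rewrite lef_pV2 ?posrE //; lra.
lra.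
Qed.

Definition shifted_reward {R : realType} (N i : nat) (v m : R) : R :=
  expert_reward N i v m - opt_reward v m.

Definition unit_valued {R : realType} (T : nat) (v m : nat -> R) : Prop :=
  forall t, (t < T)%N -> 0 <= v t <= 1 /\ 0 <= m t <= 1.

Section ShiftedReward.
Variables (R : realType) (N : nat) (v m : R).
Hypotheses (v01 : 0 <= v <= 1) (m01 : 0 <= m <= 1).

Lemma shifted_reward_range i : -1 <= shifted_reward N i v m <= 0.
Proof.
have i_ge0 : 0 <= i%:R / N%:R :> R by rewrite divr_ge0.
case/andP: v01 => ? ?; case/andP: m01 => ? ?.
rewrite /shifted_reward /expert_reward /reward /opt_reward /expert_bid.
case: (leP v (i%:R / N%:R)) => ?; case: (leP m) => ?; case: (leP (v - m) 0) => ?;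
  lra.
Qed.

Lemma shifted_reward_ge_overbid c : m <= c%:R / N%:R ->
  m - c%:R / N%:R <= shifted_reward N c v m.
Proof.
move=> m_le.
case/andP: v01 => ? ?; case/andP: m01 => ? ?.
rewrite /shifted_reward /expert_reward /reward /opt_reward /expert_bid.
case: (leP v (c%:R / N%:R)) => ?; case: (leP m) => ?; case: (leP (v - m) 0) => ?;
  lra.
Qed.

End ShiftedReward.

Definition pos_distr {R : realType} (N : nat) (p : nat -> R) : Prop :=
  (forall i, (1 <= i <= N)%N -> 0 < p i) /\ \sum_(1 <= i < N.+1) p i = 1.

Lemma pos_distr_uniform {R : realType} (N : nat) : (0 < N)%N -> pos_distr N (uniform N : nat -> R).
Proof.
move=> N_gt0; split=> [i _|]; first by rewrite invr_gt0 ltr0n.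
by rewrite /uniform sumr_const_nat subn1 /= -[_ *+ N]mulr_natr mulVf // pnatr_eq0 -lt0n.
Qed.

Lemma pos_distr_le1 {R : realType} (N : nat) (p : nat -> R) c :
  pos_distr N p -> (1 <= c <= N)%N -> p c <= 1.
Proof.
move=> [p_gt0 p_sum1] c_in; rewrite -p_sum1 (bigD1_seq c) ?iota_uniq //=; last first.
  by rewrite mem_index_iota ltnS.
rewrite lerDl big_seq_cond sumr_ge0 // => i /andP[+ _].
by rewrite mem_index_iota ltnS => /p_gt0/ltW.
Qed.

Definition expected_reward {R : realType} (N : nat) (p : nat -> R) (v m : R) : R :=
  \sum_(1 <= k < N.+1) p k * expert_reward N k v m.

Section ProdUpdate.
Variables (R : realType) (N : nat) (eta : R) (p : nat -> R) (v m : R).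
Hypotheses (eta_range : 0 < eta <= 2^-1) (p_distr : pos_distr N p).
Hypotheses (v01 : 0 <= v <= 1) (m01 : 0 <= m <= 1).

Lemma expected_reward_shifted :
  expected_reward N p v m - opt_reward v m =
  \sum_(1 <= k < N.+1) p k * shifted_reward N k v m.
Proof.
case: p_distr => _ p_sum1.
rewrite -[X in _ - X]mul1r -p_sum1 mulr_suml -sumrB.
by apply: eq_bigr => k _; rewrite /shifted_reward mulrBr.
Qed.

Lemma expected_regret_range : 0 <= opt_reward v m - expected_reward N p v m <= 1.
Proof.
case: p_distr => p_gt0 p_sum1.
have x_range k : (1 <= k < N.+1)%N -> -1 <= shifted_reward N k v m <= 0.
  by move=> _; exact: shifted_reward_range.
rewrite -[opt_reward v m - _]opprB expected_reward_shifted oppr_ge0 lerNl; apply/andP; split.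
- apply: le_trans (_ : _ <= \sum_(1 <= k < N.+1) (0 : R)) _; last by rewrite big1_eq.
  apply: ler_sum_nat => k k_in.
  by case/andP: (x_range k k_in) => _; rewrite pmulr_rle0 // p_gt0.
- rewrite -p_sum1 -sumrN; apply: ler_sum_nat => k k_in.
  by case/andP: (x_range k k_in) => x_ge _; rewrite -mulrN1 ler_pM2l // p_gt0.
Qed.

Lemma prod_normalizer :
  \sum_(1 <= k < N.+1) (1 + eta * (expert_reward N k v m - opt_reward v m)) * p k =
  1 - eta * (opt_reward v m - expected_reward N p v m).
Proof.
case: p_distr => _ p_sum1.
rewrite -[opt_reward v m - _]opprB mulrN opprK expected_reward_shifted.
rewrite -[in RHS]p_sum1 mulr_sumr -big_split /=.
by apply: eq_bigr => k _; rewrite /shifted_reward; ring.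
Qed.

Lemma prod_normalizer_gt0 :
  0 < \sum_(1 <= k < N.+1) (1 + eta * (expert_reward N k v m - opt_reward v m)) * p k.
Proof.
rewrite prod_normalizer; case/andP: eta_range => ? ?.
by case/andP: expected_regret_range => ? ?; nra.
Qed.

Lemma prod_factor_gt0 k : 0 < 1 + eta * (expert_reward N k v m - opt_reward v m).
Proof.
case/andP: eta_range => ? ?.
by case/andP: (shifted_reward_range N v01 m01 k); rewrite /shifted_reward => ? ?; nra.
Qed.

Lemma pos_distr_prod_update : pos_distr N (prod_update N eta p v m).
Proof.
case: p_distr => p_gt0 _; split=> [i i_in|].
  by rewrite /prod_update divr_gt0 ?mulr_gt0 ?prod_factor_gt0 ?p_gt0 ?prod_normalizer_gt0.
by rewrite /prod_update -mulr_suml mulfV // gt_eqF // prod_normalizer_gt0.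
Qed.

Lemma prod_update_regret c : (1 <= c <= N)%N ->
  eta * (opt_reward v m - expected_reward N p v m) <=
  ln (prod_update N eta p v m c) - ln (p c) - 2 * eta * shifted_reward N c v m.
Proof.
case: p_distr => p_gt0 _ c_in.
have G_gt0 := prod_normalizer_gt0.
rewrite /prod_update ln_div ?lnM ?posrE ?mulr_gt0 ?prod_factor_gt0 ?p_gt0 //.
have := ln_le_subr1 G_gt0; rewrite prod_normalizer.
have : 2 * (eta * shifted_reward N c v m) <= ln (1 + eta * shifted_reward N c v m).
  apply: double_le_ln1Dx; case/andP: eta_range => ? ?.
  by case/andP: (shifted_reward_range N v01 m01 c) => ? ?; nra.
rewrite /shifted_reward; lra.
Qed.

End ProdUpdate.

Definition variation {R : realType} (m : nat -> R) (s e : nat) : R :=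
  \sum_(s.+1 <= w < e) `|m w - m w.-1|.

Section Variation.
Variables (R : realType) (m : nat -> R).

Lemma variation_ge0 s e : 0 <= variation m s e.
Proof. exact: sumr_ge0. Qed.

Lemma variation_widen s s' e e' : (s' <= s)%N -> (e <= e')%N ->
  variation m s e <= variation m s' e'.
Proof.
move=> s's ee'; case: (leqP e s.+1) => [es|se].
  by rewrite /variation big_geq ?variation_ge0.
have s's1 : (s'.+1 <= s.+1)%N by [].
have se' : (s.+1 <= e')%N by apply: leq_trans ee'; apply: ltnW.
rewrite /variation [X in _ <= X](big_cat_nat s's1 se') /=.
rewrite [X in _ <= _ + X](big_cat_nat (ltnW se) ee') /=.
by rewrite addrCA lerDl addr_ge0 ?sumr_ge0.
Qed.

Lemma variation_split s u e : (s <= u <= e)%N ->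
  variation m s u + variation m u e <= variation m s e.
Proof.
case/andP=> su ue; case: (ltnP u e) => [lt_ue|le_eu].
  rewrite /variation [X in _ <= X](big_cat_nat (n := u.+1)) //= lerD2r.
  exact: (variation_widen (leqnn s) (leqnSn u)).
have -> : u = e by apply/eqP; rewrite eqn_leq ue le_eu.
by rewrite [variation m e e]/variation big_geq // addr0.
Qed.

Lemma dist_le_variation s t e : (s <= t < e)%N -> `|m t - m s| <= variation m s e.
Proof.
case/andP=> st te; apply: le_trans (variation_widen (leqnn s) te).
elim: t st {te} => [|t IH]; first by rewrite leqn0 => /eqP ->; rewrite subrr normr0 variation_ge0.
rewrite leq_eqVlt => /predU1P[<-|lt_st]; first by rewrite subrr normr0 variation_ge0.
rewrite /variation big_nat_recr //= -/(variation m s t.+1).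
by apply: le_trans (ler_distD (m t) _ _) _; rewrite addrC lerD2l IH.
Qed.

End Variation.

Lemma exists_grid_point {R : realType} (N : nat) (M : R) : (0 < N)%N -> 0 <= M ->
  exists c, (1 <= c <= N)%N /\ Num.min M 1 <= c%:R / N%:R <= M + N%:R^-1.
Proof.
move=> N_gt0 M_ge0; have N_gt0' : (0 : R) < N%:R by rewrite ltr0n.
have /andP[trunc_le lt_trunc] := truncn_itv (mulr_ge0 M_ge0 (ltW N_gt0')).
set k := Num.truncn (M * N%:R) in trunc_le lt_trunc.
case: (leqP N k.+1) => [N_le | k_lt].
  exists N; rewrite N_gt0 leqnn mulfV ?gt_eqF //; split=> //.
  rewrite ge_min lexx orbT /=.
  have : N%:R - 1 <= M * N%:R by apply: le_trans trunc_le; rewrite lerBlDr natr1 ler_nat.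
  by rewrite -(ler_pM2r N_gt0') mulrDl mulVf ?gt_eqF // mul1r; lra.
exists k.+1; split; first exact: ltnW.
rewrite ge_min ler_pdivlMr ?(ltW lt_trunc) //= ler_pdivrMr // mulrDl mulVf ?gt_eqF //.
by rewrite -natr1; lra.
Qed.

Lemma tracking_expert {R : realType} (N T : nat) (v m : nat -> R) s u :
  (0 < N)%N -> unit_valued T v m -> (s < T)%N -> (u <= T)%N ->
  exists c, (1 <= c <= N)%N /\ forall t, (s <= t < u)%N ->
    - shifted_reward N c (v t) (m t) <= 2 * variation m s u + N%:R^-1.
Proof.
move=> N_gt0 vm01 sT uT.
have [_ /andP[ms_ge0 ms_le1]] := vm01 s sT.
have [c [c_in /andP[c_ge c_le]]] :=
  exists_grid_point N_gt0 (addr_ge0 ms_ge0 (variation_ge0 m s u)).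
exists c; split=> // t st.
have tT : (t < T)%N by case/andP: st => _ /leq_trans; apply.
have [v01 /andP[mt_ge0 mt_le1]] := vm01 t tT.
have := dist_le_variation m st; rewrite ler_norml => /andP[dist_ge dist_le].
have mt_le : m t <= c%:R / N%:R.
  by apply: le_trans c_ge; rewrite le_min mt_le1 andbT; lra.
have := shifted_reward_ge_overbid v01 (_ : 0 <= m t <= 1) mt_le; rewrite mt_ge0 mt_le1 => /(_ isT).
have := variation_ge0 m s u; lra.
Qed.

Definition batch (rs : nat -> bool) (T s e : nat) : Prop :=
  [/\ (s < e <= T)%N, rs s, rs e || (e == T) & forall t, (s < t < e)%N -> ~~ rs t].

Section Batches.
Variables (R : realType) (T : nat) (rs : nat -> bool).
Hypothesis rs0 : rs 0%N.

Lemma sum_over_batches (f B : nat -> R) :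
  (forall s e, batch rs T s e -> \sum_(s <= t < e) f t <= B s - B e) ->
  \sum_(0 <= t < T) f t <= B 0%N - B T.
Proof.
move=> batch_le.
suff sum_from n s : (T - s <= n)%N -> (s <= T)%N -> rs s || (s == T) ->
    \sum_(s <= t < T) f t <= B s - B T.
  by apply: (sum_from T); rewrite ?subn0 ?rs0.
elim: n s => [|n IH] s Ts sT start.
  have -> : s = T by lia.
  by rewrite big_geq // subrr.
have [->|sT'] := eqVneq s T; first by rewrite big_geq // subrr.
have {}sT : (s < T)%N by rewrite ltn_neqAle sT' sT.
have {start}rs_s : rs s by move: start; rewrite (negbTE sT') orbF.
have ex_end : exists e, (s < e)%N && (rs e || (e == T)) by exists T; rewrite sT eqxx orbT.
case: (ex_minnP ex_end) => e /andP[se end_e] e_min.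
have eT : (e <= T)%N by apply: e_min; rewrite sT eqxx orbT.
have no_rs t : (s < t < e)%N -> ~~ rs t.
  case/andP=> st te; apply/negP=> rs_t.
  by have := e_min t; rewrite st rs_t /= leqNgt te => /(_ isT).
have bse : batch rs T s e by split=> //; rewrite se eT.
have Te : (T - e <= n)%N by lia.
rewrite (big_cat_nat (n := e)) ?(ltnW se) //=.
have := batch_le s e bse; have := IH e Te eT end_e; lra.
Qed.

Lemma sum_over_long_batches (f X : nat -> R) (A kappa lambda : R) :
  0 <= A -> 0 < lambda ->
  (forall s e, batch rs T s e -> (e < T)%N -> lambda <= (e - s)%:R) ->
  (forall s e, batch rs T s e ->
     \sum_(s <= t < e) f t <= A + kappa * (e - s)%:R + (X s - X e)) ->
  \sum_(0 <= t < T) f t <= A * (T%:R / lambda + 1) + kappa * T%:R + (X 0%N - X T).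
Proof.
move=> A_ge0 lambda_gt0 long_batch batch_le.
pose B s := A * ((T - s)%:R / lambda + (s < T)%N%:R) + kappa * (T - s)%:R + X s.
apply: le_trans (sum_over_batches (B := B) _) _.
  move=> s e bse; apply: le_trans (batch_le s e bse) _.
  have [/andP[se eT] _ _ _] := bse.
  have len : (T - s)%:R = (T - e)%:R + (e - s)%:R :> R by rewrite -natrD; congr _%:R; lia.
  have count : 1 <= (e - s)%:R / lambda + (s < T)%N%:R - (e < T)%N%:R.
    rewrite (leq_trans se eT) /=; case: ltnP => [lt_eT | _] /=.
      have : 1 <= (e - s)%:R / lambda by rewrite ler_pdivlMr // mul1r long_batch.
      lra.
    have : 0 <= (e - s)%:R / lambda by rewrite divr_ge0 // ltW.
    lra.
  have -> : B s - B e = A * ((e - s)%:R / lambda + (s < T)%N%:R - (e < T)%N%:R) +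
      kappa * (e - s)%:R + (X s - X e) by rewrite /B len; ring.
  by rewrite lerD2r lerD2r -[X in X <= _]mulr1 ler_wpM2l.
have : A * (T%:R / lambda + (0 < T)%N%:R) <= A * (T%:R / lambda + 1).
  apply: ler_wpM2l => //; rewrite lerD2l.
  by case: (0 < T)%N; rewrite ?mulr1n ?mulr0n ?ler01.
rewrite /B subn0 subnn ltnn /= mul0r mulr0 !addr0; lra.
Qed.

End Batches.

Section ProdBatch.
Variables (R : realType) (N T : nat) (eta : R) (v m : nat -> R) (rs : nat -> bool).
Hypotheses (N_gt0 : (0 < N)%N) (eta_range : 0 < eta <= 2^-1) (vm01 : unit_valued T v m).

Local Notation w := (prod_weights N eta v m rs).

Lemma exp_reward_tE t : exp_reward_t N eta v m rs t = expected_reward N (w t) (v t) (m t).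
Proof. by []. Qed.

Lemma pos_distr_prod_weights t : (t <= T)%N -> pos_distr N (w t).
Proof.
elim: t => [_|t IH tT]; first exact: pos_distr_uniform.
rewrite /=; case: (rs t.+1); first exact: pos_distr_uniform.
have [v01 m01] := vm01 tT.
exact: pos_distr_prod_update eta_range (IH (ltnW tT)) v01 m01.
Qed.

Lemma prod_batch_regret_expert s e c : batch rs T s e -> (1 <= c <= N)%N ->
  eta * \sum_(s <= t < e) (opt_reward (v t) (m t) - exp_reward_t N eta v m rs t) <=
  ln N%:R + 2 * eta * \sum_(s <= t < e) - shifted_reward N c (v t) (m t).
Proof.
case: e => [|e] [/andP[lt_se le_eT] rs_s _ no_rs] c_in //.
pose P t := prod_update N eta (w t) (v t) (m t).
have step t : (s <= t < e.+1)%N ->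
    eta * (opt_reward (v t) (m t) - exp_reward_t N eta v m rs t) <=
    ln (P t c) - ln (w t c) - 2 * eta * shifted_reward N c (v t) (m t).
  case/andP=> _ tT; have {}tT : (t < T)%N by apply: leq_trans le_eT.
  have [v01 m01] := vm01 tT.
  rewrite exp_reward_tE /P.
  exact (prod_update_regret eta_range (pos_distr_prod_weights (ltnW tT)) v01 m01 c_in).
(* The sum telescopes up to P e, the weights after the batch's last round, before any restart. *)
have telescope : \sum_(s <= t < e.+1) (ln (P t c) - ln (w t c)) = ln (P e c) - ln (w s c).
  rewrite big_nat_recr //= (telescope_sumr_eq (fun t => ln (w t c))) //; first by ring.
  move=> t /andP[st te]; congr (ln _ - _).
  by rewrite /= (negbTE (no_rs t.+1 _)) // !ltnS st te.
have lnP_le0 : ln (P e c) <= 0.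
  have [v01 m01] := vm01 le_eT.
  have w_distr := pos_distr_prod_weights (ltnW le_eT).
  exact/ln_le0/(pos_distr_le1 _ c_in)/(pos_distr_prod_update eta_range w_distr v01 m01).
have lnws : ln (w s c) = - ln N%:R.
  have -> : w s = uniform N by case: s rs_s {lt_se step telescope no_rs} => //= s ->.
  by rewrite lnV ?posrE ?ltr0n.
rewrite mulr_sumr; apply: le_trans (ler_sum_nat step) _.
by rewrite sumrB telescope lnws -mulr_sumr sumrN; lra.
Qed.

Lemma prod_batch_regret s e : batch rs T s e ->
  \sum_(s <= t < e) (opt_reward (v t) (m t) - exp_reward_t N eta v m rs t) <=
  ln N%:R / eta + 2 + 2 * (e - s)%:R / N%:R + 4 * (e.-1 - s)%:R * variation m s e.-1.
Proof.
move=> bse; have [/andP[lt_se le_eT] _ _ _] := bse.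
case: e lt_se le_eT bse => [//|e] lt_se le_eT bse /=.
(* The expert is tuned to the rounds [s, e-1) only, the last round costing at most 1:
   the stopping rule of AR-Prod controls the variation of a batch only up to its
   penultimate round. *)
have [c [c_in track]] := tracking_expert N_gt0 vm01 (leq_trans lt_se le_eT) (ltnW le_eT).
set W := variation m s e in track *; have W_ge0 : 0 <= W := variation_ge0 m s e.
have loss : \sum_(s <= t < e.+1) - shifted_reward N c (v t) (m t) <=
    (e - s)%:R * (2 * W + N%:R^-1) + 1.
  rewrite big_nat_recr //=; apply: lerD.
    by apply: le_trans (ler_sum_nat track) _; rewrite sumr_const_nat (mulr_natl _ (e - s)).
  have [v01 m01] := vm01 le_eT.
  by rewrite lerNl; case/andP: (shifted_reward_range N v01 m01 c).
have regret := prod_batch_regret_expert bse c_in.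
have eta_gt0 : 0 < eta by case/andP: eta_range.
have N_gt0' : (0 : R) < N%:R by rewrite ltr0n.
have len_le : (e - s)%:R <= (e.+1 - s)%:R :> R by rewrite ler_nat leq_sub2r.
have -> : ln N%:R / eta + 2 + 2 * (e.+1 - s)%:R / N%:R + 4 * (e - s)%:R * W =
    (ln N%:R + eta * (2 + 2 * (e.+1 - s)%:R / N%:R + 4 * (e - s)%:R * W)) / eta.
  by field; rewrite !gt_eqF.
rewrite ler_pdivlMr // mulrC; apply: le_trans regret _.
rewrite lerD2l (mulrC 2 eta) -[eta * 2 * _]mulrA ler_pM2l //.
have : (e - s)%:R / N%:R <= (e.+1 - s)%:R / N%:R :> R by apply: ler_wpM2r; rewrite ?invr_ge0.
have : 0 <= (e - s)%:R * W by rewrite mulr_ge0.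
move: loss; rewrite mulrDr -!mulrA; lra.
Qed.

Lemma exp_dyn_regret_le_batches (lambda : R) (X : nat -> R) :
  rs 0%N -> 0 < lambda ->
  (forall s e, batch rs T s e -> (e < T)%N -> lambda <= (e - s)%:R) ->
  (forall s e, batch rs T s e -> 4 * (e.-1 - s)%:R * variation m s e.-1 <= X s - X e) ->
  exp_dyn_regret T N eta v m rs <=
  (ln N%:R / eta + 2) * (T%:R / lambda + 1) + 2 * T%:R / N%:R + (X 0%N - X T).
Proof.
move=> rs0 lambda_gt0 long_batch potential.
have A_ge0 : 0 <= ln N%:R / eta + 2.
  case/andP: eta_range => eta_gt0 _.
  by rewrite addr_ge0 ?divr_ge0 ?ln_ge0 ?ler1n ?ltW.
suff : \sum_(0 <= t < T) (opt_reward (v t) (m t) - exp_reward_t N eta v m rs t) <=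
    (ln N%:R / eta + 2) * (T%:R / lambda + 1) + 2 / N%:R * T%:R + (X 0%N - X T).
  by rewrite /exp_dyn_regret -sumrB big_mkord mulrAC.
apply: (sum_over_long_batches rs0 A_ge0 lambda_gt0 long_batch) => s e bse.
apply: le_trans (prod_batch_regret bse) _.
by have := potential s e bse; rewrite mulrAC; lra.
Qed.

End ProdBatch.

Lemma sqrtr_le_sqr {R : rcfType} (x y : R) : 0 <= y -> x <= y ^+ 2 -> Num.sqrt x <= y.
Proof. by move=> y_ge0 x_le; rewrite -(ger0_norm y_ge0) -sqrtr_sqr ler_sqrt ?sqr_ge0. Qed.

Section SqrtScale.
Variables (R : rcfType) (T V : R).
Local Notation M := (Num.max (Num.sqrt (T * V)) 1).
Local Notation q := (Num.sqrt (T / (V + T^-1))).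

Lemma max_sqrt_ge (T_ge0 : 0 <= T) (V_ge0 : 0 <= V) : 1 <= M /\ T * V <= M ^+ 2.
Proof.
have M_ge1 : 1 <= M by rewrite le_max lexx orbT.
split=> //; rewrite -[X in X <= _](@sqr_sqrtr _ (T * V)) ?mulr_ge0 //.
by rewrite ler_sqr ?nnegrE ?sqrtr_ge0 ?(le_trans ler01 M_ge1) // le_max lexx.
Qed.

Lemma sqrt_mul_add_inv_le (T_gt0 : 0 < T) (V_ge0 : 0 <= V) :
  Num.sqrt (T * (V + T^-1)) <= 2 * M.
Proof.
have [M_ge1 TV_le] := max_sqrt_ge (ltW T_gt0) V_ge0.
apply: sqrtr_le_sqr; first by lra.
rewrite mulrDr mulfV ?gt_eqF // exprMn.
have : 1 <= M ^+ 2 by rewrite expr_ge1 // (le_trans ler01).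
lra.
Qed.

Lemma div_sqrt_ratio (T_gt0 : 0 < T) (V_ge0 : 0 <= V) :
  T / q = Num.sqrt (T * (V + T^-1)).
Proof.
have z_gt0 : 0 < V + T^-1 by rewrite ltr_wpDl // invr_gt0.
have q_gt0 : 0 < q by rewrite sqrtr_gt0 divr_gt0.
rewrite -[LHS]ger0_norm ?divr_ge0 ?ltW // -sqrtr_sqr; congr Num.sqrt.
have VT1_gt0 : 0 < V * T + 1 by rewrite ltr_wpDl ?mulr_ge0 // ltW.
rewrite expr_div_n sqr_sqrtr ?divr_ge0 ?ltW //.
by field; rewrite !gt_eqF.
Qed.

Lemma sqrt_ratio_mul_le (T_gt0 : 0 < T) (V_ge0 : 0 <= V) : q * V <= M.
Proof.
have [M_ge1 TV_le] := max_sqrt_ge (ltW T_gt0) V_ge0.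
have z_gt0 : 0 < V + T^-1 by rewrite ltr_wpDl // invr_gt0.
have M_ge0 : 0 <= M := le_trans ler01 M_ge1.
rewrite -ler_sqr ?nnegrE ?mulr_ge0 ?sqrtr_ge0 //.
apply: le_trans _ TV_le; rewrite exprMn sqr_sqrtr; last by rewrite divr_ge0 ?ltW.
have Vsq : V ^+ 2 <= V * (V + T^-1) by rewrite expr2 ler_wpM2l // lerDl invr_ge0 ltW.
apply: le_trans (ler_wpM2l (divr_ge0 (ltW T_gt0) (ltW z_gt0)) Vsq) _.
by rewrite mulrCA mulfVK ?gt_eqF // mulrC.
Qed.

End SqrtScale.

Lemma mul_sub_le_sqrt_sub {R : rcfType} (T a b K : R) :
  0 <= T -> 0 < a <= b -> 0 <= K <= Num.sqrt (T / b) ->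
  K * (b - a) <= 2 * Num.sqrt T * (Num.sqrt b - Num.sqrt a).
Proof.
move=> T_ge0 /andP[a_gt0 ab] /andP[K_ge0 K_le].
have b_gt0 : 0 < b := lt_le_trans a_gt0 ab.
have sa_le : Num.sqrt a <= Num.sqrt b by rewrite ler_sqrt // ltW.
have d_ge0 : 0 <= Num.sqrt b - Num.sqrt a by rewrite subr_ge0.
have diff : b - a = (Num.sqrt b - Num.sqrt a) * (Num.sqrt b + Num.sqrt a).
  by rewrite -subr_sqr !sqr_sqrtr // ltW.
have key : Num.sqrt (T / b) * Num.sqrt b = Num.sqrt T.
  by rewrite -sqrtrM ?mulfVK ?gt_eqF // divr_ge0 // ltW.
have sum_le : Num.sqrt b + Num.sqrt a <= 2 * Num.sqrt b by lra.
rewrite diff; apply: le_trans (_ : K * ((Num.sqrt b - Num.sqrt a) * (2 * Num.sqrt b)) <= _).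
  by apply: ler_wpM2l => //; apply: ler_wpM2l.
have -> : 2 * Num.sqrt T * (Num.sqrt b - Num.sqrt a) =
    Num.sqrt (T / b) * ((Num.sqrt b - Num.sqrt a) * (2 * Num.sqrt b)) by rewrite -key; ring.
by apply: ler_wpM2r; rewrite // mulr_ge0 // mulr_ge0 // sqrtr_ge0.
Qed.

Lemma regret_envelope {R : realType} (y M P Q a b : R) :
  2^-1 <= y -> 1 <= M -> 0 <= P <= a * M -> Q <= b * M -> 0 <= b ->
  (2 * y + 2) * (P + 1) + 2 + Q <= (6 * a + 2 * b + 10) * y * M.
Proof.
move=> y_ge M_ge1 /andP[P_ge0 P_le] Q_le b_ge0.
have factor1 : 2 * y + 2 <= 6 * y by lra.
have factor2 : P + 1 <= (a + 1) * M by rewrite mulrDl mul1r; lra.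
have prod : (2 * y + 2) * (P + 1) <= 6 * y * ((a + 1) * M) by apply: ler_pM; lra.
have yM : 2^-1 <= y * M.
  by rewrite -[2^-1]mulr1; apply: ler_pM => //; lra.
have bM : 0 <= b * M * (2 * y - 1) by rewrite !mulr_ge0 //; lra.
lra.
Qed.

Section FixedRestart.
Variables (T D : nat).
Hypothesis D_gt0 : (0 < D)%N.

Lemma fixed_batch_le s e : batch (fixed_restart D) T s e -> (e - s <= D)%N.
Proof.
case=> _ /eqP s_mod _ no_rs; rewrite leqNgt; apply/negP => lt_De.
have : ~~ fixed_restart D (s + D) by apply: no_rs; apply/andP; split; lia.
by rewrite /fixed_restart modnDr s_mod.
Qed.

Lemma fixed_batch_ge s e : batch (fixed_restart D) T s e -> fixed_restart D e -> (D <= e - s)%N.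
Proof.
case=> /andP[se _] s_dvd _ _ e_dvd.
by apply: dvdn_leq; rewrite ?subn_gt0 // dvdn_sub.
Qed.

Lemma fixed_batch_potential {R : realType} (m : nat -> R) s e : batch (fixed_restart D) T s e ->
  4 * (e.-1 - s)%:R * variation m s e.-1 <=
  4 * D%:R * variation m s T - 4 * D%:R * variation m e T.
Proof.
move=> bse; have [/andP[se eT] _ _ _] := bse.
have len : (e.-1 - s)%:R <= D%:R :> R.
  by rewrite ler_nat; apply: leq_trans (fixed_batch_le bse); lia.
have var_split : variation m s e.-1 <= variation m s T - variation m e T.
  apply: le_trans (variation_widen m (leqnn s) (leq_pred e)) _.
  by rewrite lerBrDr variation_split // (ltnW se).
rewrite -mulrBr -!mulrA ler_pM2l //.
by apply: ler_pM => //; exact: variation_ge0.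
Qed.

End FixedRestart.

Lemma restarted_prod_regret_bound {R : realType} (T D : nat) (V a b : R) (v m : nat -> R) :
  (2 <= T)%N -> (0 < D)%N -> 0 < a -> 0 <= V ->
  a * Num.sqrt (T%:R / (V + T%:R^-1)) <= D%:R <= b * Num.sqrt (T%:R / (V + T%:R^-1)) ->
  in_class V T v m ->
  restarted_prod_regret T D v m <=
  (6 * (2 / a) + 2 * (4 * b) + 10) * ln T%:R * Num.max (Num.sqrt (T%:R * V)) 1.
Proof.
move=> T_ge2 D_gt0 a_gt0 V_ge0 /andP[aq_le Dq_le] [vm01 var_le].
set q := Num.sqrt _ in aq_le Dq_le; set M := Num.max _ _.
have T_gt0 : (0 < T)%N by apply: leq_trans T_ge2.
have T_gt0' : (0 : R) < T%:R by rewrite ltr0n.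
have D_gt0' : (0 : R) < D%:R by rewrite ltr0n.
have q_gt0 : 0 < q by rewrite sqrtr_gt0 divr_gt0 // ltr_wpDl // invr_gt0.
have b_ge0 : 0 <= b by rewrite -(pmulr_lge0 _ q_gt0) (le_trans (ltW D_gt0')).
have eta_range : (0 : R) < 2^-1 <= (2^-1 : R) by rewrite lexx invr_gt0 ltr0n.
have rs0 : fixed_restart D 0 by rewrite /fixed_restart mod0n.
have long_batch s e : batch (fixed_restart D) T s e -> (e < T)%N -> D%:R <= (e - s)%:R :> R.
  move=> bse lt_eT; rewrite ler_nat (fixed_batch_ge bse) //.
  by case: bse => _ _ /orP[// | /eqP eT] _; move: lt_eT; rewrite eT ltnn.
have regret := exp_dyn_regret_le_batches T_gt0 eta_range vm01 rs0 D_gt0' long_batch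
  (fixed_batch_potential D_gt0 m).
apply: le_trans regret _.
have [M_ge1 _] := max_sqrt_ge (ltW T_gt0') V_ge0; rewrite -/M in M_ge1.
have T_le : T%:R <= 2 * M * q.
  by rewrite -ler_pdivrMr // div_sqrt_ratio // sqrt_mul_add_inv_le.
rewrite invrK mulfK ?gt_eqF // [ln _ * 2]mulrC [variation m T T]/variation big_geq // mulr0 subr0.
apply: regret_envelope => //; first exact: ln_nat_ge_half.
- rewrite divr_ge0 ?ler0n ?(ltW D_gt0') //= ler_pdivrMr //; apply: le_trans T_le _.
  have -> : 2 * M * q = 2 / a * M * (a * q) by field; rewrite gt_eqF.
  by apply: ler_wpM2l => //; rewrite mulr_ge0 ?divr_ge0 ?(le_trans ler01 M_ge1) ?ltW.
- have var_D : D%:R * variation m 0 T <= D%:R * V by rewrite ler_pM2l.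
  have DV : D%:R * V <= b * q * V by apply: ler_wpM2r.
  have qV : b * (q * V) <= b * M by apply: ler_wpM2l => //; exact: sqrt_ratio_mul_le.
  by rewrite -!mulrA ler_pM2l //; lra.
- by rewrite mulr_ge0.
Qed.

Definition ar_len {R : realType} (T : nat) (m : nat -> R) (t : nat) : nat :=
  (ar_state T m t).1.1.

Definition ar_var {R : realType} (T : nat) (m : nat -> R) (t : nat) : R :=
  \sum_(0 <= u < t) (if ar_restart T m u then 0 else `|m u - m u.-1|).

Section ARState.
Variables (R : realType) (T : nat) (m : nat -> R).
Local Notation rs := (ar_restart T m).

Lemma ar_restart0 : rs 0%N.
Proof. by []. Qed.

Lemma ar_state_var t : (ar_state T m t).2 + (ar_state T m t).1.2 = ar_var T m t.
Proof.
elim: t => [|t IH]; first by rewrite /ar_var big_geq //= addr0.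
rewrite /ar_var big_nat_recr //= -/(ar_var T m t) -IH /ar_restart.
case: (ar_state T m t) => [[L Vc] Vp] /=.
by case: ifP => _ /=; case: (L == 0%N) => /=; rewrite ?addr0 ?add0r ?addrA.
Qed.

Lemma ar_restartS t :
  rs t.+1 = (Num.sqrt (T%:R / (ar_var T m t.+1 + T%:R^-1)) <= (ar_len T m t).+1%:R).
Proof.
rewrite -ar_state_var /ar_restart /ar_len /=.
case: (ar_state T m t) => [[L Vc] Vp] /=.
set Vc' := if L == 0%N then _ else _.
by case: ltP => h; rewrite ?addr0 ?h // leNgt h.
Qed.

Lemma ar_lenS t : ~~ rs t.+1 -> ar_len T m t.+1 = (ar_len T m t).+1.
Proof.
rewrite /ar_restart /ar_len /=.
case: (ar_state T m t) => [[L Vc] Vp] /=.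
by case: ifP.
Qed.

Lemma ar_len_batch s t : rs s -> (s <= t)%N -> (forall u, (s < u <= t)%N -> ~~ rs u) ->
  ar_len T m t = (t - s)%N.
Proof.
move=> rs_s; elim: t => [|t IH] st no_rs.
  by move: st rs_s; rewrite leqn0 => /eqP -> /eqP.
case: (ltngtP s t.+1) st => // [lt_st | <-] _; last by rewrite subnn; apply/eqP.
rewrite ar_lenS ?IH ?subSn //; last by apply: no_rs; rewrite lt_st leqnn.
by move=> u /andP[su ut]; apply: no_rs; rewrite su ltnW.
Qed.


Lemma ar_var_ge0 t : 0 <= ar_var T m t.
Proof. by rewrite sumr_ge0 // => u _; case: ifP. Qed.

Lemma ar_var_mono t t' : (t <= t')%N -> ar_var T m t <= ar_var T m t'.
Proof.
move=> tt'; rewrite /ar_var (big_cat_nat (n := t) (p := t')) //= lerDl.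
by rewrite sumr_ge0 // => u _; case: ifP.
Qed.

Lemma ar_var_le_variation : ar_var T m T <= variation m 0 T.
Proof.
rewrite /ar_var /variation; case: (posnP T) => [->|T_gt0]; first by rewrite !big_geq.
rewrite big_ltn // ar_restart0 add0r.
by apply: ler_sum_nat => u _; case: ifP.
Qed.

Lemma ar_var_batch s u : rs s -> (s <= u)%N -> (forall t, (s < t < u)%N -> ~~ rs t) ->
  ar_var T m u = ar_var T m s + variation m s u.
Proof.
move=> rs_s su no_rs; rewrite /ar_var (big_cat_nat (n := s) (p := u)) //=; congr (_ + _).
case: (ltnP s u) => [lt_su | us]; last by rewrite /variation !big_geq // leqW.
rewrite /variation big_ltn // rs_s add0r; apply: eq_big_nat => t /andP[st tu].
by rewrite (negbTE (no_rs t _)) // st.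
Qed.

Lemma ar_batch_long (V : R) s e : (0 < T)%N -> ar_var T m T <= V ->
  batch rs T s e -> (e < T)%N -> Num.sqrt (T%:R / (V + T%:R^-1)) <= (e - s)%:R.
Proof.
move=> T_gt0 var_le bse lt_eT; have [/andP[se _] rs_s end_e no_rs] := bse.
have rs_e : rs e by case/orP: end_e => // /eqP eT; rewrite eT ltnn in lt_eT.
have T_gt0' : (0 : R) < T%:R by rewrite ltr0n.
have c_gt0 : (0 : R) < T%:R^-1 by rewrite invr_gt0.
have V_ge0 : 0 <= V := le_trans (ar_var_ge0 T) var_le.
have stop : Num.sqrt (T%:R / (ar_var T m e + T%:R^-1)) <= (e - s)%:R.
  case: e se {lt_eT bse end_e} rs_e no_rs => // e se rs_e no_rs.
  by rewrite ar_restartS (ar_len_batch rs_s) -?subSn // in rs_e.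
apply: le_trans stop; rewrite ler_sqrt; last by rewrite divr_ge0 ?addr_ge0 ?ar_var_ge0 // ltW.
rewrite ler_pM2l // lef_pV2 ?posrE ?ltr_wpDl ?ar_var_ge0 // lerD2r.
exact: le_trans (ar_var_mono (ltnW lt_eT)) var_le.
Qed.

Lemma ar_batch_short s e : batch rs T s e ->
  (e.-1 - s)%:R <= Num.sqrt (T%:R / (ar_var T m e.-1 + T%:R^-1)).
Proof.
case=> /andP[se _] rs_s _ no_rs.
case: (leqP e.-1 s) => [es | lt_se1]; first by rewrite (eqP es) sqrtr_ge0.
have [t e1] : exists t, e.-1 = t.+1 by exists e.-2; lia.
have rs_t : ~~ rs t.+1 by rewrite -e1; apply: no_rs; rewrite lt_se1; lia.
rewrite ar_restartS -ltNge (ar_len_batch rs_s) in rs_t; first last.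
- by move=> u /andP[su ut]; apply: no_rs; rewrite su; lia.
- lia.
by rewrite e1 subSn; [exact: ltW | lia].
Qed.

Lemma ar_batch_potential s e : (0 < T)%N -> batch rs T s e ->
  4 * (e.-1 - s)%:R * variation m s e.-1 <=
  8 * Num.sqrt T%:R * (Num.sqrt (ar_var T m e + T%:R^-1) - Num.sqrt (ar_var T m s + T%:R^-1)).
Proof.
move=> T_gt0 bse; have [/andP[se eT] rs_s _ no_rs] := bse.
have T_gt0' : (0 : R) < T%:R by rewrite ltr0n.
have c_gt0 : (0 : R) < T%:R^-1 by rewrite invr_gt0.
have var_e1 : ar_var T m e.-1 = ar_var T m s + variation m s e.-1.
  by apply: ar_var_batch => [||t /andP[st te]] //; [lia | apply: no_rs; rewrite st; lia].
have a_gt0 : 0 < ar_var T m s + T%:R^-1 by rewrite ltr_wpDl ?ar_var_ge0.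
have ab : ar_var T m s + T%:R^-1 <= ar_var T m e.-1 + T%:R^-1.
  by rewrite lerD2r var_e1 lerDl variation_ge0.
have := mul_sub_le_sqrt_sub (ltW T_gt0') (introT andP (conj a_gt0 ab))
  (introT andP (conj (ler0n _ _) (ar_batch_short bse))).
have -> : ar_var T m e.-1 + T%:R^-1 - (ar_var T m s + T%:R^-1) = variation m s e.-1.
  by rewrite var_e1; ring.
have mono : Num.sqrt (ar_var T m e.-1 + T%:R^-1) <= Num.sqrt (ar_var T m e + T%:R^-1).
  by rewrite ler_sqrt ?lerD2r ?ar_var_mono ?leq_pred // addr_ge0 ?ar_var_ge0 // ltW.
have : 0 <= Num.sqrt T%:R *
    (Num.sqrt (ar_var T m e + T%:R^-1) - Num.sqrt (ar_var T m e.-1 + T%:R^-1)).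
  by rewrite mulr_ge0 ?sqrtr_ge0 // subr_ge0.
lra.
Qed.

End ARState.

Lemma ar_prod_regret_bound {R : realType} (T : nat) (V : R) (v m : nat -> R) :
  (2 <= T)%N -> 0 <= V -> in_class V T v m ->
  ar_prod_regret T v m <= (6 * 2 + 2 * 16 + 10) * ln T%:R * Num.max (Num.sqrt (T%:R * V)) 1.
Proof.
move=> T_ge2 V_ge0 [vm01 var_le].
pose c : R := T%:R^-1; pose q := Num.sqrt (T%:R / (V + c)); set M := Num.max _ _.
have T_gt0 : (0 < T)%N by apply: leq_trans T_ge2.
have T_gt0' : (0 : R) < T%:R by rewrite ltr0n.
have c_gt0 : 0 < c by rewrite invr_gt0.
have q_gt0 : 0 < q by rewrite sqrtr_gt0 divr_gt0 // ltr_wpDl.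
have var_T : ar_var T m T <= V := le_trans (ar_var_le_variation T m) var_le.
have eta_range : (0 : R) < 2^-1 <= (2^-1 : R) by rewrite lexx invr_gt0 ltr0n.
pose X s := - (8 * Num.sqrt T%:R * Num.sqrt (ar_var T m s + c)).
have potential s e : batch (ar_restart T m) T s e ->
    4 * (e.-1 - s)%:R * variation m s e.-1 <= X s - X e.
  by move=> bse; have := ar_batch_potential T_gt0 bse; rewrite /X; lra.
have regret := exp_dyn_regret_le_batches T_gt0 eta_range vm01 (ar_restart0 T m) q_gt0
  (fun s e => ar_batch_long T_gt0 var_T) potential.
apply: le_trans regret _.
have [M_ge1 _] := max_sqrt_ge (ltW T_gt0') V_ge0; rewrite -/M in M_ge1.
have TVc_le : Num.sqrt T%:R * Num.sqrt (V + c) <= 2 * M.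
  by rewrite -sqrtrM ?ler0n // sqrt_mul_add_inv_le.
rewrite invrK mulfK ?gt_eqF // [ln _ * 2]mulrC.
apply: regret_envelope => //; first exact: ln_nat_ge_half.
  by rewrite divr_ge0 ?(ltW q_gt0) //= /q /c div_sqrt_ratio // sqrtrM ?ler0n.
have var0 : ar_var T m 0 = 0 by rewrite /ar_var big_geq.
have var_TV : Num.sqrt (ar_var T m T + c) <= Num.sqrt (V + c).
  by rewrite ler_sqrt ?lerD2r // addr_ge0 // ltW.
have : 0 <= Num.sqrt T%:R * (Num.sqrt (V + c) - Num.sqrt (ar_var T m T + c)).
  by rewrite mulr_ge0 ?sqrtr_ge0 // subr_ge0.
have : 0 <= Num.sqrt T%:R * Num.sqrt c by rewrite mulr_ge0 ?sqrtr_ge0.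
rewrite /X var0 add0r; lra.
Qed.

Theorem theorem1 (R : realType) (V : nat -> R) :
  (forall T, 0 <= V T) ->
  (* V_T = o(T) *)
  (forall e : R, 0 < e -> exists T0 : nat, forall T : nat, (T0 <= T)%N -> V T <= e * T%:R) ->
  (* (i) V_T known: constant batch size Delta_T of order sqrt(T / V_T) *)
  (forall (a b : R) (Delta : nat -> nat),
      0 < a -> a <= b ->
      (forall T, (0 < Delta T)%N) ->
      (forall T, (0 < T)%N ->
         a * Num.sqrt (T%:R / (V T + T%:R^-1)) <= (Delta T)%:R <=
         b * Num.sqrt (T%:R / (V T + T%:R^-1))) ->
      exists (C : R) (k : nat) (T0 : nat),
        forall T : nat, (T0 <= T)%N ->
        forall v m : nat -> R, in_class (V T) T v m ->
          restarted_prod_regret T (Delta T) v m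
            <= C * (ln T%:R) ^+ k * Num.max (Num.sqrt (T%:R * V T)) 1)
  /\
  (* (ii) V_T unknown: AR-Prod *)
  (exists (C : R) (k : nat) (T0 : nat),
      forall T : nat, (T0 <= T)%N ->
      forall v m : nat -> R, in_class (V T) T v m ->
        ar_prod_regret T v m <= C * (ln T%:R) ^+ k * Num.max (Num.sqrt (T%:R * V T)) 1).
Proof.
(* The bounds hold for every T >= 2. *)
move=> V_ge0 _; split.
- move=> a b Delta a_gt0 _ Delta_gt0 Delta_range.
  exists (6 * (2 / a) + 2 * (4 * b) + 10), 1%N, 2%N => T T_ge2 v m vm_in.
  rewrite expr1; apply: restarted_prod_regret_bound => //.
  exact/Delta_range/(leq_trans _ T_ge2).
- exists (6 * 2 + 2 * 16 + 10), 1%N, 2%N => T T_ge2 v m vm_in.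
  by rewrite expr1; apply: ar_prod_regret_bound.
Qed.
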